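(* Let $a,b$ be complex numbers of modulus one. There is no $6\times 6$ complex Hadamard matrix $H$ all of whose entries lie in $\{1,a,b\}$ which is complex equivalent to a matrix of the form $$H(\alpha,\beta)=\begin{bmatrix} 1&1&1&1&1&1\\ 1&1&1&-1&-1&-1\\ 1&\omega&\omega^2&\alpha&\alpha\omega&\alpha\omega^2\\ 1&\omega&\omega^2&-\alpha&-\alpha\omega&-\alpha\omega^2\\ 1&\omega^2&\omega&\beta&\beta\omega^2&\beta\omega\\ 1&\omega^2&\omega&-\beta&-\beta\omega^2&-\beta\omega \end{bmatrix},$$ where $\omega=e^{2\pi i/3}$ and $\alpha,\beta$ are complex numbers of modulus one.
   Context: A complex Hadamard matrix (CHM) of order $n$ is an $n\times n$ complex matrix $H$ all of whose entries have modulus one and which satisfies $HH^\dagger=nI$. A monomial unitary matrix is a unitary matrix each of whose rows and columns has exactly one nonzero entry, that entry having modulus one. Two $n\times n$ matrices $U,V$ are complex equivalent if $U=PVQ$ for some $n\times n$ monomial unitary matrices $P,Q$. *)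

From HB Require Import structures.
From mathcomp Require Import all_boot all_order all_algebra.
From mathcomp Require Import reals.
From mathcomp.real_closed Require Import complex.
Set Implicit Arguments. Unset Strict Implicit. Unset Printing Implicit Defensive.
Import Order.TTheory GRing.Theory Num.Theory.
Local Open Scope ring_scope.
Local Open Scope complex_scope.

Section Defs.
Variable C : numClosedFieldType.

Definition adjmx (m n : nat) (A : 'M[C]_(m, n)) : 'M[C]_(n, m) :=
  (map_mx Num.conj A)^T.

Definition unitary_mx (n : nat) (U : 'M[C]_n) : Prop :=
  U *m adjmx U = 1%:M.

Definition CHM (n : nat) (H : 'M[C]_n) : Prop :=
  (forall i j, `|H i j| = 1) /\ H *m adjmx H = n%:R%:M.

Definition monomial_unitary (n : nat) (P : 'M[C]_n) : Prop :=
  unitary_mx P /\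
  (forall i, #|[set j | P i j != 0]| = 1%N) /\
  (forall j, #|[set i | P i j != 0]| = 1%N) /\
  (forall i j, P i j != 0 -> `|P i j| = 1).

Definition complex_equiv (n : nat) (U V : 'M[C]_n) : Prop :=
  exists P Q : 'M[C]_n, monomial_unitary P /\ monomial_unitary Q /\
    U = P *m V *m Q.

Definition Hab (w al be : C) : 'M[C]_6 :=
  let rows : seq (seq C) :=
    [:: [:: 1; 1; 1; 1; 1; 1];
        [:: 1; 1; 1; -1; -1; -1];
        [:: 1; w; w^+2; al; al * w; al * w^+2];
        [:: 1; w; w^+2; - al; - (al * w); - (al * w^+2)];
        [:: 1; w^+2; w; be; be * w^+2; be * w];
        [:: 1; w^+2; w; - be; - (be * w^+2); - (be * w)]] in
  \matrix_(i < 6, j < 6) nth 0 (nth [::] rows i) j.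
End Defs.

(* omega = e^{2 pi i / 3} = -1/2 + i sqrt(3)/2 in R[i] *)
Definition omega (R : realType) : R[i] :=
  (- (1 / 2%:R)) +i* (Num.sqrt 3%:R / 2%:R).

From HB Require Import structures.
From mathcomp Require Import all_boot all_order all_algebra.
From mathcomp Require Import reals.
From mathcomp.real_closed Require Import complex.
From mathcomp Require Import ring.
Import Order.TTheory GRing.Theory Num.Theory.
Set Implicit Arguments. Unset Strict Implicit. Unset Printing Implicit Defensive.
Local Open Scope ring_scope.

(* Writing H = P H(al, be) Q with monomial P and Q, every entry p_k H(al, be)_kl q_l of a
   rescaled H(al, be) occurs in H, hence lies in the at most three-element set {1, a, b}.
   Rows 0, 1, 2 restricted to columns 0, 1, 2 give the values p_0 q_j, p_1 q_j and
   p_2 w^j q_j; a case analysis on which of the q_j coincide, comparing cubes (which do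
   not see powers of w), shows that this pattern inside a three-element set forces
   p_1^3 = p_0^3.  Columns 3, 4, 5 carry the same pattern with p_1 replaced by -p_1,
   so (-p_1)^3 = p_0^3 as well, which is impossible. *)

Lemma prod_scale_uniq (F : fieldType) (s : seq F) (c : F) :
  c != 0 -> uniq s -> {subset map ( *%R c) s <= s} ->
  c ^+ size s * \prod_(u <- s) u = \prod_(u <- s) u.
Proof.
move=> c0 s_uniq cs_sub.
have cs_uniq : uniq (map ( *%R c) s) by rewrite map_inj_uniq //; exact: mulfI.
have [|_ cs_eq] := uniq_min_size cs_uniq cs_sub; first by rewrite size_map.
rewrite -[RHS](perm_big _ (uniq_perm cs_uniq s_uniq cs_eq)) big_map.
by rewrite big_split /= big_const_seq count_predT iter_mulr_1.
Qed.

Section ThreeValues.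
Variable F : fieldType.
Variable S : seq F.
Hypothesis S_size : (size S <= 3)%N.
Hypothesis S_neq0 : 0 \notin S.

Lemma mem_neq0 v : v \in S -> v != 0.
Proof. by apply: contraTneq => ->. Qed.

Lemma not_uniq4 u v x y : u \in S -> v \in S -> x \in S -> y \in S ->
  ~~ uniq [:: u; v; x; y].
Proof.
move=> Su Sv Sx Sy; apply/negP => uvxy_uniq.
have sub : {subset [:: u; v; x; y] <= S} by apply/allP; rewrite /= Su Sv Sx Sy.
by have := leq_trans (uniq_leq_size uvxy_uniq sub) S_size.
Qed.

Lemma mem_uniq3 u v x y : u \in S -> v \in S -> x \in S -> y \in S ->
  uniq [:: u; v; x] -> y \in [:: u; v; x].
Proof.
move=> Su Sv Sx Sy uvx_uniq; have := not_uniq4 Su Sv Sx Sy.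
by rewrite -[[:: u; v; x; y]]/(rcons [:: u; v; x] y) rcons_uniq uvx_uniq andbT negbK.
Qed.

Lemma cube1_of_scale (c u : F) : u != 0 -> (c * u) ^+ 3 = u ^+ 3 -> c ^+ 3 = 1.
Proof.
move=> u0 cu3; have u3 : u ^+ 3 != 0 by rewrite expf_neq0.
by apply: (mulIf u3); rewrite mul1r -exprMn.
Qed.

Lemma mulr_cube_neq (c u v : F) : c ^+ 3 != 1 -> v != 0 -> u ^+ 3 = v ^+ 3 -> c * u != v.
Proof.
move=> c3 v0 uv; apply: contra c3 => /eqP cuv; apply/eqP.
have u0 : u != 0 by apply: contra_neq v0 => u0; rewrite -cuv u0 mulr0.
by apply: (cube1_of_scale u0); rewrite cuv uv.
Qed.

Variable w : F.
Hypothesis w3 : w ^+ 3 = 1.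
Hypothesis w_neq1 : w != 1.

Lemma w2_neq1 : w ^+ 2 != 1.
Proof. by apply: contra w_neq1 => /eqP w2; rewrite -w3 exprS w2 mulr1. Qed.

Lemma w2_neqw : w ^+ 2 != w.
Proof.
have w0 : w != 0 by apply: contra_eq_neq w3 => ->; rewrite expr0n eq_sym oner_eq0.
apply: contra w_neq1 => /eqP w2.
by rewrite -(mulfI w0 (_ : w * w = w * 1)) // mulr1 -expr2 w2.
Qed.

Lemma cube_mulw (u : F) : (u * w) ^+ 3 = u ^+ 3.
Proof. by rewrite exprMn w3 mulr1. Qed.

Lemma cube_mulw2 (u : F) : (u * w ^+ 2) ^+ 3 = u ^+ 3.
Proof. by rewrite exprMn -exprM mulnC exprM w3 expr1n mulr1. Qed.

Lemma cube_coset u v : u \in S -> u * w \in S -> u * w ^+ 2 \in S -> v \in S ->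
  v ^+ 3 = u ^+ 3.
Proof.
move=> Su Suw Suw2 Sv; have u0 := mem_neq0 Su.
have scale_neq (x y : F) : x != y -> u * x != u * y by rewrite (inj_eq (mulfI u0)).
have coset_uniq : uniq [:: u; u * w; u * w ^+ 2].
  rewrite /= !inE !negb_or andbT -[X in X != u * w]mulr1 -[X in X != u * w ^+ 2]mulr1.
  by rewrite !scale_neq // 1?eq_sym ?w_neq1 ?w2_neq1 ?w2_neqw.
move: (mem_uniq3 Su Suw Suw2 Sv coset_uniq); rewrite !inE.
by case/or3P => /eqP->; rewrite ?cube_mulw ?cube_mulw2.
Qed.
Lemma scale_cube1_cube_eq (c x x' : F) : x != x' -> x ^+ 3 = x' ^+ 3 ->
  x \in S -> x' \in S -> c * x \in S -> c * x' \in S -> c ^+ 3 = 1.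
Proof.
move=> xx' eq3 Sx Sx' Scx Scx'; have [//|c3] := eqVneq (c ^+ 3) 1.
have x0 := mem_neq0 Sx; have x'0 := mem_neq0 Sx'.
have c0 : c != 0 by apply: contraTneq Scx => ->; rewrite mul0r.
(* otherwise x, x', c x and c x' are four distinct elements of S *)
have := not_uniq4 Sx Sx' Scx Scx'.
rewrite /= !inE !negb_or xx' (inj_eq (mulfI c0)) xx'.
rewrite (eq_sym x) (eq_sym x (c * x')) (eq_sym x') (eq_sym x' (c * x')).
by rewrite (mulr_cube_neq c3 x0) // (mulr_cube_neq c3 x0 (esym eq3))
  (mulr_cube_neq c3 x'0 eq3) (mulr_cube_neq c3 x'0).
Qed.

Lemma mem_coset_pair (s x x' v : F) : x ^+ 3 != x' ^+ 3 ->
  s * x \in S -> s * w * x \in S -> s * w ^+ 2 * x' \in S -> v \in S ->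
  [\/ v = s * x, v = s * w * x | v = s * w ^+ 2 * x'].
Proof.
move=> neq3 S0 S1 S2 Sv; have x0 : x != 0 by apply: contraTneq S0 => ->; rewrite mulr0.
have s0 : s != 0 by apply: contraTneq S0 => ->; rewrite mul0r.
have s3_neq0 : s ^+ 3 != 0 by rewrite expf_neq0.
have neq_y u : u ^+ 3 = s ^+ 3 * x ^+ 3 -> u != s * w ^+ 2 * x'.
  move=> u3; apply: contra_neq neq3 => uy.
  by apply: (mulfI s3_neq0); rewrite -u3 uy exprMn cube_mulw2.
have uniq3 : uniq [:: s * x; s * w * x; s * w ^+ 2 * x'].
  rewrite /= !inE !negb_or !neq_y ?exprMn ?w3 ?mulr1 // !andbT.
  by rewrite (inj_eq (mulIf x0)) -{1}[s]mulr1 (inj_eq (mulfI s0)) eq_sym w_neq1.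
move: (mem_uniq3 S0 S1 S2 Sv uniq3); rewrite !inE.
by case/or3P => /eqP; [exact: Or31 | exact: Or32 | exact: Or33].
Qed.

(* When x^3 != x'^3, the values s x, s w x, s w^2 x' exhaust S; comparing cubes pins
   down where x, x', c x and c x' sit, and each placement contradicts w^3 = 1 != w. *)
Lemma scale_cube1_pair (c s x x' : F) : x != x' ->
  x \in S -> x' \in S -> c * x \in S -> c * x' \in S ->
  s * x \in S -> s * w * x \in S -> s * w ^+ 2 * x' \in S -> c ^+ 3 = 1.
Proof.
move=> xx' Sx Sx' Scx Scx' S0 S1 S2.
have [eq3 | neq3] := eqVneq (x ^+ 3) (x' ^+ 3).
  exact: scale_cube1_cube_eq eq3 Sx Sx' Scx Scx'.
have [//|/eqP c3] := eqVneq (c ^+ 3) 1; exfalso.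
have x0 := mem_neq0 Sx; have x'0 := mem_neq0 Sx'.
have s0 : s != 0 by apply: contraTneq S0 => ->; rewrite mul0r.
have S_eq v := mem_coset_pair neq3 S0 S1 S2 (v := v).
have [s3 | s3] := eqVneq (s ^+ 3) 1.
  have sw2 : s * w ^+ 2 = 1.
    apply: (mulIf x'0); rewrite mul1r.
    case: (S_eq x' Sx') => x'E; last exact/esym.
      by move: neq3; rewrite x'E exprMn s3 mul1r eqxx.
    by move: neq3; rewrite x'E !exprMn s3 w3 mulr1 mul1r eqxx.
  case: (S_eq x Sx) => xE.
  - have s1 : s = 1 by apply: (mulIf x0); rewrite mul1r -xE.
    by move: w2_neq1; rewrite -sw2 s1 mul1r eqxx.
  - have sw1 : s * w = 1 by apply: (mulIf x0); rewrite mul1r -xE.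
    by move: w_neq1; rewrite -sw2 expr2 mulrA sw1 mul1r eqxx.
  - by move: neq3; rewrite xE exprMn cube_mulw2 s3 mul1r eqxx.
have xE : x = s * w ^+ 2 * x'.
  case: (S_eq x Sx) => // xE; move: s3.
    have -> : s = 1 by apply: (mulIf x0); rewrite mul1r -xE.
    by rewrite expr1n eqxx.
  have sw1 : s * w = 1 by apply: (mulIf x0); rewrite mul1r -xE.
  by rewrite -(cube_mulw s) sw1 expr1n eqxx.
have x'3 : x' ^+ 3 = s ^+ 3 * x ^+ 3.
  case: (S_eq x' Sx') => [->|->|x'E]; rewrite ?exprMn ?w3 ?mulr1 //.
  by move: xx'; rewrite xE -x'E eqxx.
have cE : c = s * w ^+ 2.
  apply: (mulIf x'0); case: (S_eq _ Scx') => // e; exfalso; apply: c3.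
    by apply: (cube1_of_scale x'0); rewrite e x'3 exprMn.
  by apply: (cube1_of_scale x'0); rewrite e x'3 !exprMn w3 mulr1.
case: (S_eq _ Scx) => e.
- move: w2_neq1; rewrite (mulfI s0 (_ : s * w ^+ 2 = s * 1)) ?eqxx //.
  by rewrite mulr1 -cE (mulIf x0 e).
- move: w2_neqw; rewrite (mulfI s0 (_ : s * w ^+ 2 = s * w)) ?eqxx //.
  by rewrite -cE (mulIf x0 e).
- by apply: c3; apply: (cube1_of_scale x0); rewrite e -xE.
Qed.

Lemma scale_cube1_uniq3 (c x0 x1 x2 : F) : uniq [:: x0; x1; x2] ->
  x0 \in S -> x1 \in S -> x2 \in S -> c * x0 \in S -> c * x1 \in S -> c * x2 \in S ->
  c ^+ 3 = 1.
Proof.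
move=> X_uniq Sx0 Sx1 Sx2 Scx0 Scx1 Scx2.
have c0 : c != 0 by apply: contraTneq Scx0 => ->; rewrite mul0r.
have cX_sub : {subset map ( *%R c) [:: x0; x1; x2] <= [:: x0; x1; x2]}.
  by apply/allP; rewrite /= !(mem_uniq3 Sx0 Sx1 Sx2).
have X0 : x0 * (x1 * x2) != 0 by rewrite !mulf_neq0 ?mem_neq0.
have := prod_scale_uniq c0 X_uniq cX_sub; rewrite !big_cons big_nil mulr1 /=.
by rewrite -[RHS]mul1r => /(mulIf X0).
Qed.

Lemma scale_cube1 (c t x0 x1 x2 : F) :
  x0 \in S -> x1 \in S -> x2 \in S -> c * x0 \in S -> c * x1 \in S -> c * x2 \in S ->
  t * x0 \in S -> t * w * x1 \in S -> t * w ^+ 2 * x2 \in S -> c ^+ 3 = 1.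
Proof.
move=> Sx0 Sx1 Sx2 Scx0 Scx1 Scx2 S0 S1 S2.
have [e01 | x01] := eqVneq x0 x1.
  subst x1; have [e02 | x02] := eqVneq x0 x2; last first.
    exact: scale_cube1_pair x02 Sx0 Sx2 Scx0 Scx2 S0 S1 S2.
  subst x2; have coset v : v \in S -> v ^+ 3 = (t * x0) ^+ 3.
    by apply: cube_coset; rewrite // mulrAC.
  by apply: (cube1_of_scale (mem_neq0 Sx0)); rewrite !coset.
have [x12 | x12] := eqVneq x1 x2.
  apply: (scale_cube1_pair (s := t * w) _ Sx1 Sx0 Scx1 Scx0 S1).
  - by rewrite eq_sym.
  - by rewrite (_ : _ * x1 = t * w ^+ 2 * x2) //; ring: x12.
  - by rewrite (_ : _ * x0 = t * x0) //; ring: w3.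
have [x02 | x02] := eqVneq x0 x2.
  apply: (scale_cube1_pair (s := t * w ^+ 2) x01 Sx0 Sx1 Scx0 Scx1).
  - by rewrite (_ : _ * x0 = t * w ^+ 2 * x2) //; ring: x02.
  - by rewrite (_ : _ * x0 = t * x0) //; ring: w3.
  - by rewrite (_ : _ * x1 = t * w * x1) //; ring: w3.
by apply: scale_cube1_uniq3 Sx0 Sx1 Sx2 Scx0 Scx1 Scx2; rewrite /= !inE !negb_or x01 x02 x12.
Qed.

Lemma rows_cube_eq (r0 r1 r2 : F) (q : 'I_3 -> F) :
  (forall j, r0 * q j \in S) -> (forall j, r1 * q j \in S) ->
  (forall j : 'I_3, r2 * w ^+ j * q j \in S) -> r1 ^+ 3 = r0 ^+ 3.
Proof.
move=> S0 S1 S2.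
have r0_neq0 : r0 != 0 by apply: contraTneq (S0 ord0) => ->; rewrite mul0r.
have ratio r (v : F) : r / r0 * (r0 * v) = r * v by rewrite mulrA divfK.
have ratio_w r u (v : F) : r / r0 * u * (r0 * v) = r * u * v.
  by rewrite mulrAC ratio mulrAC.
pose j1 : 'I_3 := Ordinal (isT : (1 < 3)%N); pose j2 : 'I_3 := Ordinal (isT : (2 < 3)%N).
have c3 : (r1 / r0) ^+ 3 = 1.
  apply: (scale_cube1 (t := r2 / r0) (S0 ord0) (S0 j1) (S0 j2));
    rewrite ?ratio_w ?ratio //.
  - by have := S2 ord0; rewrite expr0 mulr1.
  - exact: (S2 j1).
  - exact: (S2 j2).
by rewrite -[r1](divfK r0_neq0) exprMn c3 mul1r.
Qed.
End ThreeValues.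

Lemma support1_col (R : nmodType) (n : nat) (A : 'M[R]_n) :
  (forall i, #|[set j | A i j != 0]| = 1%N) -> (forall j, #|[set i | A i j != 0]| = 1%N) ->
  forall k, exists i, forall l, l != k -> A i l = 0.
Proof.
move=> row1 col1 k.
have /cards1P[i col_k] : #|[set i | A i k != 0]| == 1%N by rewrite col1.
have Aik : A i k != 0 by have := set11 i; rewrite -col_k inE.
exists i => l lk; apply/eqP; apply: contraNT lk => Ail.
have /cards1P[j row_i] : #|[set j | A i j != 0]| == 1%N by rewrite row1.
have : l \in [set j | A i j != 0] by rewrite inE.
have : k \in [set j | A i j != 0] by rewrite inE.
by rewrite row_i !inE => /eqP-> /eqP->.
Qed.

Lemma complex_equiv_entries (C : numClosedFieldType) (n : nat) (U V : 'M[C]_n) :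
  complex_equiv U V ->
  exists p q : 'I_n -> C, forall k l, exists i j, U i j = p k * V k l * q l.
Proof.
case=> [P [Q [[_ [Prow [Pcol _]]] [[_ [Qrow [Qcol _]]] ->]]]].
have /fin_all_exists[r Pr] := support1_col Prow Pcol.
have QTrow i : #|[set j | Q^T i j != 0]| = 1%N.
  by rewrite -(Qcol i); apply: eq_card => j; rewrite !inE mxE.
have QTcol j : #|[set i | Q^T i j != 0]| = 1%N.
  by rewrite -(Qrow j); apply: eq_card => i; rewrite !inE mxE.
have /fin_all_exists[c Qc] := support1_col QTrow QTcol.
exists (fun k => P (r k) k), (fun l => Q l (c l)) => k l; exists (r k), (c l).
rewrite mxE (bigD1 l) //= big1 ?addr0 => [|m ml]; last first.
  by move: (Qc l m ml); rewrite mxE => ->; rewrite mulr0.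
rewrite mxE (bigD1 k) //= big1 ?addr0 // => m mk.
by rewrite Pr ?mul0r.
Qed.

Lemma Hab_not_three_valued (C : numClosedFieldType) (S : seq C) (w al be : C)
    (p q : 'I_6 -> C) :
  (size S <= 3)%N -> 0 \notin S -> w ^+ 3 = 1 -> w != 1 ->
  ~ (forall k l, p k * Hab w al be k l * q l \in S).
Proof.
move=> S_size S_neq0 w3 w_neq1 mem.
pose i0 : 'I_6 := ord0; pose i1 : 'I_6 := Ordinal (isT : (1 < 6)%N).
pose i2 : 'I_6 := Ordinal (isT : (2 < 6)%N).
have rows := rows_cube_eq S_size S_neq0 w3 w_neq1.
have cube_left : p i1 ^+ 3 = p i0 ^+ 3.
  apply: (rows _ _ (p i2) (fun j => q (lshift 3 j))) => j;
    [move: (mem i0 (lshift 3 j)) | move: (mem i1 (lshift 3 j)) | move: (mem i2 (lshift 3 j))];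
  by rewrite /Hab mxE; case: j => [[|[|[|//]]] ?]; rewrite /= ?mulr1.
have cube_right : (- p i1) ^+ 3 = p i0 ^+ 3.
  apply: (rows _ _ (p i2 * al) (fun j => q (rshift 3 j))) => j;
    [move: (mem i0 (rshift 3 j)) | move: (mem i1 (rshift 3 j)) | move: (mem i2 (rshift 3 j))];
  by rewrite /Hab mxE; case: j => [[|[|[|//]]] ?]; rewrite /= ?mulr1 ?mulrN1 ?mulrA.
have p0_neq0 : p i0 != 0 by apply: contraTneq (mem i0 i0) => ->; rewrite !mul0r.
have : p i0 ^+ 3 *+ 2 = 0 by rewrite mulr2n -{1}cube_right -cube_left; ring.
by move/eqP; rewrite mulrn_eq0 expf_eq0 (negbTE p0_neq0) andbF.
Qed.

Lemma omega_root (R : realType) : omega R ^+ 2 + omega R + 1 = 0.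
Proof.
rewrite /omega expr2; apply/eqP; rewrite eq_complex /=.
have sqrt3 : Num.sqrt (3%:R : R) * Num.sqrt 3%:R = 3%:R by rewrite -expr2 sqr_sqrtr // ler0n.
apply/andP; split; apply/eqP; last by field.
by rewrite mulrACA sqrt3; field.
Qed.

Lemma omega3 (R : realType) : omega R ^+ 3 = 1.
Proof.
have -> : omega R ^+ 3 = (omega R - 1) * (omega R ^+ 2 + omega R + 1) + 1 by ring.
by rewrite omega_root mulr0 add0r.
Qed.

Lemma omega_neq1 (R : realType) : omega R != 1.
Proof.
apply: contra_eq_neq (omega_root R) => ->.
by rewrite expr1n (_ : 1 + 1 + 1 = 3%:R) ?pnatr_eq0 //; ring.
Qed.

Theorem mainTheorem3 (R : realType) (a b : R[i]) :
  `|a| = 1 -> `|b| = 1 ->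
  ~ (exists (H : 'M[R[i]]_6) (al be : R[i]),
        CHM H /\
        (forall i j, H i j \in [:: 1; a; b]) /\
        `|al| = 1 /\ `|be| = 1 /\
        complex_equiv H (Hab (omega R) al be)).
Proof.
move=> a1 b1 [H [al [be [_ [H_mem [_ [_ H_equiv]]]]]]].
have [p [q Hpq]] := complex_equiv_entries H_equiv.
apply: (Hab_not_three_valued (S := [:: 1; a; b]) (al := al) (be := be) (p := p) (q := q)
  _ _ (omega3 R) (omega_neq1 R)) => //.
  by rewrite !inE !negb_or !(eq_sym 0) -(normr_eq0 a) -(normr_eq0 b) a1 b1 oner_eq0.
by move=> k l; have [i [j <-]] := Hpq k l.
Qed.
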